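(* For every integer $n\ge1$ and every integer $j$ with $1\le j\le n$, setting $\mathcal{B}_{m,i}=\sum_{k=i}^{m}(-1)^{k-i}{m\brace k}{k\brack i}H_k$, one has \[ \mathcal{B}_{n+1,j}=\mathcal{B}_{n,j-1}+\binom{n}{j}\frac{B_{n+1-j}}{n+1-j}. \]
   Context: $B_m$ denotes the $m$th Bernoulli number, defined by $\frac{t}{e^t-1}=\sum_{m\ge0}B_m\frac{t^m}{m!}$. ${k\brack j}$ denotes the unsigned Stirling number of the first kind ($x(x+1)\cdots(x+k-1)=\sum_j{k\brack j}x^j$), ${n\brace k}$ the Stirling number of the second kind ($x^n=\sum_k(-1)^{n-k}{n\brace k}x(x+1)\cdots(x+k-1)$), and $H_k=\sum_{i=1}^k 1/i$ the $k$th harmonic number, $H_0=0$. *)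

From mathcomp Require Import all_boot all_order all_algebra.
Set Implicit Arguments. Unset Strict Implicit. Unset Printing Implicit Defensive.
Import Order.TTheory GRing.Theory Num.Theory.
Local Open Scope ring_scope.

(* Unsigned Stirling numbers of the first kind [n brack k]:
   x(x+1)...(x+n-1) = sum_k [n brack k] x^k, via the standard recurrence. *)
Fixpoint stirling1 (n k : nat) : nat :=
  match n, k with
  | 0, 0 => 1
  | 0, _.+1 => 0
  | _.+1, 0 => 0
  | n'.+1, k'.+1 => (n' * stirling1 n' k'.+1 + stirling1 n' k')%N
  end.

Fixpoint stirling2 (n k : nat) : nat :=
  match n, k with
  | 0, 0 => 1
  | 0, _.+1 => 0
  | _.+1, 0 => 0
  | n'.+1, k'.+1 => (k'.+1 * stirling2 n' k'.+1 + stirling2 n' k')%N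
  end.

Definition harmonic (k : nat) : rat := \sum_(1 <= i < k.+1) (i%:R)^-1.

(* Bernoulli numbers with t/(e^t - 1) = sum_m B_m t^m/m! (so B_1 = -1/2).
   The generating-function identity (sum_k B_k t^k/k!) * ((e^t-1)/t) = 1
   reads coefficientwise: sum_{k<=m} (B_k/k!) * 1/(m-k+1)! = [m = 0].
   bern_list n = [:: B_0; ...; B_n] solves it recursively. *)
Fixpoint bern_list (n : nat) : seq rat :=
  match n with
  | 0 => [:: 1]
  | n'.+1 =>
      let s := bern_list n' in
      rcons s ((n'.+1)`!%:R *
        - (\sum_(k < n'.+1) (nth 0 s k / (k`!)%:R) / (((n'.+1 - k).+1)`!)%:R))
  end.

Definition bernoulli (m : nat) : rat := nth 0 (bern_list m) m.

Definition calB (m i : nat) : rat :=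
  \sum_(i <= k < m.+1)
     (-1) ^+ (k - i) * (stirling2 m k)%:R * (stirling1 k i)%:R * harmonic k.

From mathcomp Require Import all_boot all_order all_algebra.
From mathcomp Require Import ring zify.
Set Implicit Arguments. Unset Strict Implicit. Unset Printing Implicit Defensive.
Import GRing.Theory Num.Theory.
Local Open Scope ring_scope.

(* The signed Stirling number (-1)^(k-i) [k brack i] is the coefficient of x^i
   in the falling factorial x(x-1)...(x-k+1).  The recurrences of both kinds of
   Stirling numbers together with H_(k+1) = H_k + 1/(k+1) show that
   calB_(n+1,j+1) - calB_(n,j) is the coefficient of x^(j+1) in
   P(x) = sum_k {n brace k} x(x-1)...(x-k)/(k+1).  Both P and Faulhaber's
   polynomial sum_i C(n+1,i) B_i x^(n+1-i)/(n+1) vanish at 0 and have forward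
   difference x^n, so they coincide; the coefficient of x^(j+1) in the latter is
   C(n+1,j+1) B_(n-j)/(n+1) = C(n,j+1) B_(n-j)/(n-j). *)

Lemma stirling1_small k i : (k < i)%N -> stirling1 k i = 0%N.
Proof. by elim: k i => [|k IH] [|i] //= lt_ki; rewrite !IH ?muln0 // ltnW. Qed.

Lemma stirling2_small n k : (n < k)%N -> stirling2 n k = 0%N.
Proof. by elim: n k => [|n IH] [|k] //= lt_nk; rewrite !IH ?muln0 // ltnW. Qed.

Lemma harmonicS k : harmonic k.+1 = harmonic k + k.+1%:R^-1.
Proof. by rewrite /harmonic big_nat_recr. Qed.

Lemma big_ord_shift (V : nmodType) (f : nat -> V) N : f 0%N = 0 -> f N = 0 ->
  \sum_(k < N) f k.+1 = \sum_(k < N) f k.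
Proof.
move=> f0 fN; have := @big_ord_recl _ 0 +%R N (fun k : 'I_N.+1 => f k).
by rewrite big_ord_recr /= f0 fN addr0 add0r => <-.
Qed.

Section FallingFactorial.
Variable R : comNzRingType.

Definition falling_poly k : {poly R} := \prod_(i < k) ('X - i%:R%:P).

Lemma falling_polyS k : falling_poly k.+1 = falling_poly k * ('X - k%:R%:P).
Proof. by rewrite /falling_poly big_ord_recr. Qed.

Lemma horner_falling_poly k x : (falling_poly k).[x] = \prod_(i < k) (x - i%:R).
Proof.
by rewrite horner_prod; apply: eq_bigr => i _; rewrite hornerXsubC.
Qed.

Lemma horner_falling_polyS0 k : (falling_poly k.+1).[0] = 0.
Proof. by rewrite horner_falling_poly big_ord_recl subr0 mul0r. Qed.

Lemma falling_polyS_diff k x :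
  (falling_poly k.+1).[x + 1] - (falling_poly k.+1).[x] =
  k.+1%:R * (falling_poly k).[x].
Proof.
rewrite [in X in _ - X]falling_polyS hornerM hornerXsubC !horner_falling_poly.
rewrite big_ord_recl /=.
under eq_bigr => i _ do rewrite /bump /= add1n -addn1 natrD opprD addrACA subrr addr0.
rewrite -natr1; ring.
Qed.

Lemma coef_falling_polySS k j :
  (falling_poly k.+1)`_j.+1 = (falling_poly k)`_j - k%:R * (falling_poly k)`_j.+1.
Proof. by rewrite falling_polyS mulrBr coefB coefMX coefMC mulrC. Qed.

Lemma coef_falling_poly k j :
  (falling_poly k)`_j = (-1) ^+ (k + j) * (stirling1 k j)%:R.
Proof.
elim: k j => [|k IH] [|j].
- by rewrite /falling_poly big_ord0 coef1 mulr1.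
- by rewrite /falling_poly big_ord0 coef1 mulr0.
- by rewrite -horner_coef0 horner_falling_polyS0 mulr0.
- rewrite coef_falling_polySS !IH !addSn !addnS !exprS natrD natrM; ring.
Qed.

Lemma stirling2_falling_poly n x :
  \sum_(k < n.+1) (stirling2 n k)%:R * (falling_poly k).[x] = x ^+ n.
Proof.
elim: n => [|n IH].
  by rewrite big_ord1 horner_falling_poly big_ord0 !mulr1.
pose f k := k%:R * (stirling2 n k)%:R * (falling_poly k).[x].
have shift_f : \sum_(k < n.+1) f k.+1 = \sum_(k < n.+1) f k.
  by apply: big_ord_shift; rewrite /f ?mul0r // stirling2_small // mulr0 mul0r.
rewrite exprS -IH mulr_sumr big_ord_recl /= mul0r add0r.
transitivity (\sum_(k < n.+1) (f k.+1 + (stirling2 n k)%:R * (falling_poly k.+1).[x])).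
  by apply: eq_bigr => k _; rewrite /f /bump /= !add0n add1n natrD natrM; ring.
rewrite big_split /= shift_f -big_split /=; apply: eq_bigr => k _.
by rewrite /f falling_polyS hornerM hornerXsubC; ring.
Qed.

End FallingFactorial.
Arguments falling_poly {R} k.

Lemma calBE m i : calB m i =
  \sum_(k < m.+1) (stirling2 m k)%:R * (falling_poly k)`_i * harmonic k.
Proof.
rewrite /calB big_geq_mkord big_mkcond /=; apply: eq_bigr => k _.
rewrite coef_falling_poly; case: leqP => [le_ik|lt_ki].
  have -> : (k + i = k - i + 2 * i)%N by lia.
  by rewrite exprD exprM sqrrN !expr1n mulr1; ring.
by rewrite stirling1_small // !mulr0 mul0r.
Qed.

Lemma calBSS n j : calB n.+1 j.+1 = calB n j +
  \sum_(k < n.+1) (stirling2 n k)%:R / k.+1%:R * (falling_poly k.+1)`_j.+1.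
Proof.
pose c k := (falling_poly k : {poly rat})`_j.+1.
pose f k := k%:R * (stirling2 n k)%:R * c k * harmonic k.
have shift_f : \sum_(k < n.+1) f k.+1 = \sum_(k < n.+1) f k.
  by apply: big_ord_shift; rewrite /f ?mul0r // stirling2_small // mulr0 !mul0r.
rewrite !calBE big_ord_recl /= mul0r mul0r add0r.
transitivity (\sum_(k < n.+1) (f k.+1 + (stirling2 n k)%:R * c k.+1 * harmonic k.+1)).
  by apply: eq_bigr => k _; rewrite /f /c /bump /= !add0n add1n natrD natrM; ring.
rewrite big_split /= shift_f -!big_split /=; apply: eq_bigr => k _.
rewrite /f /c coef_falling_polySS harmonicS.
by field; rewrite addrC natr1 pnatr_eq0.
Qed.

Lemma poly_natr_eq0 (R : numDomainType) (p : {poly R}) :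
  (forall t : nat, p.[t%:R] = 0) -> p = 0.
Proof.
move=> p_nat0; apply: (@roots_geq_poly_eq0 _ p [seq t%:R | t <- iota 0 (size p)]).
- by apply/allP => _ /mapP [t _ ->]; rewrite /root p_nat0.
- by rewrite map_inj_uniq ?iota_uniq // => s t /eqP; rewrite eqr_nat => /eqP.
- by rewrite size_map size_iota.
Qed.

Lemma poly_eq_diff (R : numDomainType) (p q : {poly R}) :
  (forall x, p.[x + 1] - p.[x] = q.[x + 1] - q.[x]) -> p.[0] = q.[0] -> p = q.
Proof.
move=> eq_diff eq0; apply/eqP; rewrite -subr_eq0; apply/eqP/poly_natr_eq0.
elim=> [|t IH]; first by rewrite hornerD hornerN eq0 subrr.
rewrite -natr1 hornerD hornerN; rewrite hornerD hornerN in IH.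
transitivity ((p.[t%:R + 1] - p.[t%:R]) - (q.[t%:R + 1] - q.[t%:R]) +
  (p.[t%:R] - q.[t%:R])); first by ring.
by rewrite eq_diff IH subrr addr0.
Qed.

Lemma size_bern_list p : size (bern_list p) = p.+1.
Proof. by elim: p => [|p IH] //=; rewrite size_rcons IH. Qed.

Lemma nth_bern_list p k : (k <= p)%N -> nth 0 (bern_list p) k = bernoulli k.
Proof.
elim: p => [|p IH]; first by rewrite leqn0 => /eqP ->.
rewrite leq_eqVlt => /predU1P [-> // | lt_kp].
by rewrite /= nth_rcons size_bern_list lt_kp IH.
Qed.

Lemma bernoulliS p : bernoulli p.+1 = (p.+1)`!%:R *
  - (\sum_(k < p.+1) (bernoulli k / (k`!)%:R) / (((p.+1 - k).+1)`!)%:R).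
Proof.
rewrite {1}/bernoulli /= nth_rcons size_bern_list ltnn eqxx.
by congr (_ * - _); apply: eq_bigr => k _; rewrite nth_bern_list // -ltnS.
Qed.

Lemma sum_bin_bernoulli M :
  \sum_(i < M) 'C(M, i)%:R * bernoulli i = (M == 1%N)%:R.
Proof.
case: M => [|[|p]]; first by rewrite big_ord0.
  by rewrite big_ord1 mul1r.
rewrite big_ord_recr /= binSn bernoulliS mulrA -natrM -factS.
rewrite mulrN mulr_sumr -sumrB big1 // => k _.
have le_kp : (k <= p.+1)%N := ltnW (ltn_ord k).
rewrite -subSn // -(bin_fact (leqW le_kp)) !natrM.
have fact_neq0 m : (m`!)%:R != 0 :> rat by rewrite pnatr_eq0 -lt0n fact_gt0.
by apply/eqP; rewrite subr_eq0; apply/eqP; field; rewrite !fact_neq0.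
Qed.

Lemma exprD1n_sub (R : pzRingType) (x : R) m N : (m <= N)%N ->
  (x + 1) ^+ m - x ^+ m = \sum_(l < N) x ^+ l * ('C(m, l) * (l < m))%:R.
Proof.
move=> le_mN; rewrite exprD1n big_ord_recr /= binn mulr1n addrK.
rewrite (big_ord_widen N (fun l => x ^+ l *+ 'C(m, l))) // big_mkcond /=.
by apply: eq_bigr => l _; case: ltnP; rewrite ?muln1 ?muln0 ?mulr0 ?mulr_natr.
Qed.

Lemma bin_trinomial m i l : (i + l <= m)%N ->
  ('C(m, i) * 'C(m - i, l) = 'C(m, l) * 'C(m - l, i))%N.
Proof.
move=> le_ilm.
have le_im : (i <= m)%N by lia.
have le_lmi : (l <= m - i)%N by lia.
have le_lm : (l <= m)%N by lia.
have le_iml : (i <= m - l)%N by lia.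
have facts_gt0 : (0 < i`! * (l`! * (m - i - l)`!))%N by rewrite !muln_gt0 !fact_gt0.
apply/eqP; rewrite -(eqn_pmul2r facts_gt0); apply/eqP.
transitivity (m`!); first by rewrite -(bin_fact le_im) -(bin_fact le_lmi); ring.
by rewrite -(bin_fact le_lm) -(bin_fact le_iml) subnAC; ring.
Qed.

Lemma bin_trinomial_lt m i l :
  ('C(m, i) * ('C(m - i, l) * (l < m - i)) = 'C(m, l) * ('C(m - l, i) * (i < m - l)))%N.
Proof.
rewrite !ltn_subRL addnC; case: ltnP => lt_ilm; last by rewrite !muln0.
by rewrite /= !muln1 bin_trinomial // addnC ltnW.
Qed.

Definition faulhaber_poly n : {poly rat} :=
  \sum_(i < n.+1) ('C(n.+1, i)%:R * bernoulli i / n.+1%:R) *: 'X^(n.+1 - i).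

Lemma sum_faulhaber_coef n l : (l < n.+1)%N ->
  \sum_(i < n.+1) bernoulli i / n.+1%:R *
    ('C(n.+1, i) * ('C(n.+1 - i, l) * (l < n.+1 - i)))%:R = (l == n)%:R.
Proof.
move=> lt_ln.
transitivity ('C(n.+1, l)%:R / n.+1%:R *
  \sum_(i < n.+1 | (i < n.+1 - l)%N) 'C(n.+1 - l, i)%:R * bernoulli i).
  rewrite [in RHS]big_mkcond mulr_sumr; apply: eq_bigr => i _.
  by rewrite bin_trinomial_lt; case: ltnP => _ /=; rewrite ?muln1 ?muln0 ?natrM; ring.
rewrite -(big_ord_widen n.+1 (fun i => 'C(n.+1 - l, i)%:R * bernoulli i)) ?leq_subr //.
rewrite sum_bin_bernoulli; have [-> | ne_ln] := eqVneq l n.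
  by rewrite subSnn binSn divff ?mulr1 // pnatr_eq0.
by rewrite (_ : (n.+1 - l == 1)%N = false) ?mulr0 //; apply/negbTE; lia.
Qed.

Lemma faulhaber_poly_diff n x :
  (faulhaber_poly n).[x + 1] - (faulhaber_poly n).[x] = x ^+ n.
Proof.
rewrite !horner_sum -sumrB.
transitivity (\sum_(i < n.+1) \sum_(l < n.+1) x ^+ l * (bernoulli i / n.+1%:R *
   ('C(n.+1, i) * ('C(n.+1 - i, l) * (l < n.+1 - i)))%:R)).
  apply: eq_bigr => i _; rewrite !hornerZ !hornerXn -mulrBr.
  rewrite (exprD1n_sub x (leq_subr i n.+1)) mulr_sumr.
  by apply: eq_bigr => l _; rewrite natrM; ring.
rewrite exchange_big /= big_ord_recr /= big1 ?add0r => [|l _].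
  by rewrite -mulr_sumr sum_faulhaber_coef // eqxx mulr1.
by rewrite -mulr_sumr sum_faulhaber_coef ?ltn_eqF ?mulr0 // leqW.
Qed.

Lemma horner_faulhaber_poly0 n : (faulhaber_poly n).[0] = 0.
Proof.
rewrite horner_sum big1 // => i _.
by rewrite hornerZ hornerXn expr0n subn_eq0 leqNgt ltn_ord mulr0.
Qed.

Lemma coef_faulhaber_poly n j : (j <= n)%N ->
  (faulhaber_poly n)`_j.+1 = 'C(n.+1, j.+1)%:R * bernoulli (n - j) / n.+1%:R.
Proof.
move=> le_jn; rewrite coef_sum (bigD1 (Ordinal (leq_subr j n : (n - j < n.+1)%N))) //=.
rewrite coefZ coefXn subSn ?leq_subr // subKn // eqxx mulr1.
rewrite big1 ?addr0 => [|i ne_ij]; first by rewrite -subSS bin_sub.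
rewrite coefZ coefXn; case: eqP => [eq_ji | _]; last by rewrite mulr0.
by move/eqP: ne_ij; case; apply: val_inj => /=; lia.
Qed.

Definition falling_faulhaber_poly n : {poly rat} :=
  \sum_(k < n.+1) ((stirling2 n k)%:R / k.+1%:R) *: falling_poly k.+1.

Lemma coef_falling_faulhaber_poly n i : (falling_faulhaber_poly n)`_i =
  \sum_(k < n.+1) (stirling2 n k)%:R / k.+1%:R * (falling_poly k.+1)`_i.
Proof. by rewrite coef_sum; apply: eq_bigr => k _; rewrite coefZ. Qed.

Lemma falling_faulhaber_poly_diff n x :
  (falling_faulhaber_poly n).[x + 1] - (falling_faulhaber_poly n).[x] = x ^+ n.
Proof.
rewrite !horner_sum -sumrB -stirling2_falling_poly; apply: eq_bigr => k _.
rewrite !hornerZ -mulrBr falling_polyS_diff.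
by field; rewrite addrC natr1 pnatr_eq0.
Qed.

Lemma horner_falling_faulhaber_poly0 n : (falling_faulhaber_poly n).[0] = 0.
Proof.
by rewrite horner_sum big1 // => k _; rewrite hornerZ horner_falling_polyS0 mulr0.
Qed.

Lemma falling_faulhaber_polyE n : falling_faulhaber_poly n = faulhaber_poly n.
Proof.
apply: poly_eq_diff => [x|]; first by rewrite falling_faulhaber_poly_diff faulhaber_poly_diff.
by rewrite horner_falling_faulhaber_poly0 horner_faulhaber_poly0.
Qed.

Lemma bin_divSS (R : numFieldType) n j : (j < n)%N ->
  'C(n.+1, j.+1)%:R / n.+1%:R = 'C(n, j.+1)%:R / (n - j)%:R :> R.
Proof.
move=> lt_jn; apply/eqP; rewrite eqr_div ?pnatr_eq0 ?subn_eq0 -?ltnNge //.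
have := mul_bin_down n.+1 j.+1; rewrite subSS => /= bin_down.
by rewrite -!natrM eqr_nat mulnC [X in _ == X]mulnC bin_down.
Qed.

Theorem mainTheorem2 (n j : nat) :
  (1 <= n)%N -> (1 <= j <= n)%N ->
  calB n.+1 j =
  calB n j.-1 + ('C(n, j))%:R * (bernoulli (n.+1 - j) / ((n.+1 - j)%N)%:R).
Proof.
move=> _; case: j => [|j] //= lt_jn.
rewrite calBSS -coef_falling_faulhaber_poly falling_faulhaber_polyE.
rewrite (coef_faulhaber_poly (ltnW lt_jn)) mulrAC bin_divSS //.
by rewrite mulrAC mulrA.
Qed.
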